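(* For every $\omega$-elementary wqo $A$, $\mathbf{h}(A)=\omega$.
   Context: A wqo is a quasi-order in which every infinite sequence has $i<j$ with $x_i\le x_j$. $\mathbf{h}(A)$ is the rank of the root of the well-founded tree of finite strictly decreasing sequences of $A$ (root: empty sequence, children: one-element extensions; rank $r(s)=\sup\{r(t)+1: t\text{ child of } s\}$). $\omega$-elementary wqos are given by the grammar $A::=\omega\mid A\sqcup B\mid A\times B\mid A^{<\omega}\mid\mathsf{M}^\diamond(A)\mid\mathcal{P}_f(A)$, where $\omega$ is the wqo $(\omega,\le)$, $\sqcup$ is disjoint union ordered by $\le_A\cup\le_B$, $\times$ is Cartesian product with componentwise order, $A^{<\omega}$ is finite words with subword embedding ($u_1\cdots u_n\le v_1\cdots v_m$ iff there are $f_1<\dots<f_n$ with $u_i\le v_{f_i}$), $\mathsf{M}^\diamond(A)$ is finite multisets with multiset embedding, and $\mathcal{P}_f(A)$ is finite subsets with Hoare embedding ($S\le_H S'$ iff $\forall a\in S\,\exists b\in S'\,a\le b$). *)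

From Stdlib Require Import List Arith.
Import ListNotations.

Definition rel_at {T : Type} (le : T -> T -> Prop) (u v : list T) (i j : nat) : Prop :=
  exists x y, nth_error u i = Some x /\ nth_error v j = Some y /\ le x y.

Definition qlt {T : Type} (le : T -> T -> Prop) (x y : T) : Prop := le x y /\ ~ le y x.

Fixpoint sdecr {T : Type} (le : T -> T -> Prop) (s : list T) : Prop :=
  match s with
  | [] => True
  | x :: s' =>
      match s' with
      | [] => True
      | y :: _ => qlt le y x /\ sdecr le s'
      end
  end.

(* In the tree of finite strictly decreasing sequences, the children of a node s
   are the one-element extensions s ++ [x] that are still strictly decreasing. *)
Definition child {T : Type} (le : T -> T -> Prop) (s t : list T) : Prop :=
  exists x, t = s ++ [x] /\ sdecr le t.

(* rank_le le n s  <->  r(s) <= n  (for a finite ordinal n), where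
   r(s) = sup { r(t) + 1 : t child of s }. *)
Fixpoint rank_le {T : Type} (le : T -> T -> Prop) (n : nat) (s : list T) : Prop :=
  match n with
  | 0 => forall t, ~ child le s t
  | S m => forall t, child le s t -> rank_le le m t
  end.

(* r(s) = omega :  sup { r(t)+1 : t child of s } = omega, i.e. every child has
   a finite rank and the ranks of the children are unbounded in omega. *)
Definition rank_is_omega {T : Type} (le : T -> T -> Prop) (s : list T) : Prop :=
  (forall t, child le s t -> exists n, rank_le le n t) /\
  (forall n, exists t, child le s t /\ ~ rank_le le n t).

(* h(A) = omega : the root (empty sequence) has rank omega *)
Definition height_is_omega {T : Type} (le : T -> T -> Prop) : Prop :=
  rank_is_omega le [].

Definition sum_le {A B : Type} (leA : A -> A -> Prop) (leB : B -> B -> Prop)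
  (x y : A + B) : Prop :=
  match x, y with
  | inl a, inl a' => leA a a'
  | inr b, inr b' => leB b b'
  | _, _ => False
  end.

Definition prod_le {A B : Type} (leA : A -> A -> Prop) (leB : B -> B -> Prop)
  (x y : A * B) : Prop := leA (fst x) (fst y) /\ leB (snd x) (snd y).

Definition word_le {A : Type} (le : A -> A -> Prop) (u v : list A) : Prop :=
  exists f : nat -> nat,
    (forall i j, i < j < length u -> f i < f j) /\
    (forall i, i < length u -> rel_at le u v i (f i)).

(* multiset embedding (finite multisets represented by lists; the order is
   invariant under permutation): there is an injection f from the elements of u
   into those of v with u_i <= v_{f i} *)
Definition mset_le {A : Type} (le : A -> A -> Prop) (u v : list A) : Prop :=
  exists f : nat -> nat,
    (forall i j, i < length u -> j < length u -> f i = f j -> i = j) /\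
    (forall i, i < length u -> rel_at le u v i (f i)).

(* Hoare embedding on finite subsets (represented by lists; the order is
   invariant under permutation and duplication) *)
Definition hoare_le {A : Type} (le : A -> A -> Prop) (S S' : list A) : Prop :=
  forall a, In a S -> exists b, In b S' /\ le a b.

Inductive ewqo : Type :=
| EOmega : ewqo
| ESum : ewqo -> ewqo -> ewqo
| EProd : ewqo -> ewqo -> ewqo
| EWords : ewqo -> ewqo
| EMset : ewqo -> ewqo
| EPfin : ewqo -> ewqo.

Fixpoint carrier (e : ewqo) : Type :=
  match e with
  | EOmega => nat
  | ESum a b => (carrier a + carrier b)%type
  | EProd a b => (carrier a * carrier b)%type
  | EWords a => list (carrier a)
  | EMset a => list (carrier a)
  | EPfin a => list (carrier a)
  end.

Fixpoint ele (e : ewqo) : carrier e -> carrier e -> Prop :=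
  match e return carrier e -> carrier e -> Prop with
  | EOmega => Nat.le
  | ESum a b => sum_le (ele a) (ele b)
  | EProd a b => prod_le (ele a) (ele b)
  | EWords a => word_le (ele a)
  | EMset a => mset_le (ele a)
  | EPfin a => hoare_le (ele a)
  end.

(* Every omega-elementary wqo is transitive, has an infinite strictly ascending
   chain, and below each element has only finitely many elements up to
   equivalence; the six constructors preserve all three properties.  A strictly
   decreasing sequence x > y_1 > ... > y_k consists of pairwise inequivalent
   elements below x, so k is bounded by the number of classes below x and every
   child [x] of the root has finite rank.  Conversely an ascending chain g yields
   the decreasing sequences g(n) > ... > g(0), so the ranks of the children
   [g(n)] are unbounded. *)

From Stdlib Require Import List Arith Lia Relations Classical.
Import ListNotations.

Definition qeq {T : Type} (le : T -> T -> Prop) (x y : T) : Prop := le x y /\ le y x.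

Definition finite_downsets {T : Type} (le : T -> T -> Prop) : Prop :=
  forall x, exists D, forall y, le y x -> exists d, In d D /\ qeq le y d.

Definition has_ascending_chain {T : Type} (le : T -> T -> Prop) : Prop :=
  exists g : nat -> T, forall i, qlt le (g i) (g (S i)).

Record omega_qo {T : Type} (le : T -> T -> Prop) : Prop := {
  omega_qo_trans : transitive T le;
  omega_qo_finite_downsets : finite_downsets le;
  omega_qo_chain : has_ascending_chain le }.

Section Height.
Variables (T : Type) (le : T -> T -> Prop).
Hypothesis le_trans : transitive T le.

Lemma qlt_trans x y z : qlt le x y -> qlt le y z -> qlt le x z.
Proof. intros [Hxy Hyx] [Hyz Hzy]; split; eauto. Qed.

Lemma sdecr_snoc s x y :
  sdecr le (s ++ [x]) -> qlt le y x -> sdecr le ((s ++ [x]) ++ [y]).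
Proof.
  induction s as [|a s IH]; intros Hs Hyx; [simpl; auto|].
  destruct s as [|b s]; [simpl in *; tauto|].
  destruct Hs as [Hba Hs]; split; [exact Hba | exact (IH Hs Hyx)].
Qed.

Lemma sdecr_length_le x D u :
  (forall z, qlt le z x -> exists d, In d D /\ qeq le z d) ->
  sdecr le (x :: u) -> length u <= length D.
Proof.
  revert x D; induction u as [|y u IH]; intros x D HD Hs; simpl; [lia|].
  destruct Hs as [Hyx Hs].
  destruct (HD y Hyx) as [d [Hd [Hyd Hdy]]].
  destruct (in_split _ _ Hd) as [D1 [D2 ->]].
  enough (length u <= length (D1 ++ D2)) by (rewrite !length_app in *; simpl; lia).
  apply (IH y); auto.
  intros z Hzy. destruct (HD z (qlt_trans _ _ _ Hzy Hyx)) as [d' [Hd' Hzd']].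
  exists d'; split; auto.
  apply in_app_or in Hd'; apply in_or_app.
  destruct Hd' as [H | [<- | H]]; auto.
  (* otherwise z ~ d ~ y, so y <= z, contradicting z < y *)
  exfalso; apply (proj2 Hzy); destruct Hzd'; eauto.
Qed.

Lemma rank_le_of_length_bound n s :
  (forall u, sdecr le (s ++ u) -> length u <= n) -> rank_le le n s.
Proof.
  revert s; induction n as [|n IH]; intros s H t [x [-> Ht]].
  - specialize (H [x] Ht); simpl in H; lia.
  - apply IH; intros u Hu; rewrite <- app_assoc in Hu.
    specialize (H _ Hu); simpl in H; lia.
Qed.

Lemma chain_not_rank_le (g : nat -> T) (Hg : forall i, qlt le (g i) (g (S i))) m :
  forall s k, m <= k -> sdecr le (s ++ [g (S k)]) -> ~ rank_le le m (s ++ [g (S k)]).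
Proof.
  induction m as [|m IH]; intros s k Hmk Hs Hr.
  - apply (Hr ((s ++ [g (S k)]) ++ [g k])); exists (g k); auto using sdecr_snoc.
  - destruct k as [|k]; [lia|].
    apply (IH (s ++ [g (S (S k))]) k); [lia | apply sdecr_snoc; auto |].
    apply Hr; exists (g (S k)); auto using sdecr_snoc.
Qed.

Theorem height_is_omega_of_chain :
  finite_downsets le -> has_ascending_chain le -> height_is_omega le.
Proof.
  intros Hfd [g Hg]; split.
  - intros t [x [-> _]]; destruct (Hfd x) as [D HD].
    exists (length D); apply rank_le_of_length_bound; intros u Hu.
    apply (sdecr_length_le x); auto.
    intros z [Hzx _]; auto.
  - intros n; exists [g (S n)]; split.
    + exists (g (S n)); simpl; auto.
    + apply (chain_not_rank_le g Hg n [] n); simpl; auto.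
Qed.

End Height.

Lemma has_ascending_chain_embed {A B : Type} (leA : A -> A -> Prop) (leB : B -> B -> Prop)
  (f : A -> B) :
  (forall x y, leB (f x) (f y) <-> leA x y) ->
  has_ascending_chain leA -> has_ascending_chain leB.
Proof.
  intros Hf [g Hg]; exists (fun i => f (g i)); intros i.
  unfold qlt; rewrite !Hf; apply Hg.
Qed.

Lemma omega_qo_nat : omega_qo Nat.le.
Proof.
  split.
  - intros x y z; lia.
  - intros x; exists (seq 0 (S x)); intros y Hy; exists y.
    split; [apply in_seq; lia | split; lia].
  - exists (fun i => i); intros i; split; lia.
Qed.

Lemma omega_qo_sum {A B : Type} (leA : A -> A -> Prop) (leB : B -> B -> Prop) :
  omega_qo leA -> omega_qo leB -> omega_qo (sum_le leA leB).
Proof.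
  intros [HtA HfA HcA] [HtB HfB _]; split.
  - intros [x|x] [y|y] [z|z]; simpl; try tauto; eauto.
  - intros [x|x].
    + destruct (HfA x) as [D HD]; exists (map inl D); intros [y|y] Hy; [|destruct Hy].
      destruct (HD y Hy) as [d [Hd Hyd]]; exists (inl d); auto using in_map.
    + destruct (HfB x) as [D HD]; exists (map inr D); intros [y|y] Hy; [destruct Hy|].
      destruct (HD y Hy) as [d [Hd Hyd]]; exists (inr d); auto using in_map.
  - apply (has_ascending_chain_embed leA _ inl); [reflexivity | exact HcA].
Qed.

Lemma omega_qo_prod {A B : Type} (leA : A -> A -> Prop) (leB : B -> B -> Prop) :
  omega_qo leA -> omega_qo leB -> omega_qo (prod_le leA leB).
Proof.
  intros [HtA HfA [g Hg]] [HtB HfB [h Hh]]; split.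
  - intros x y z [H1 H2] [H3 H4]; split; eauto.
  - intros [x1 x2]; destruct (HfA x1) as [D1 H1], (HfB x2) as [D2 H2].
    exists (list_prod D1 D2); intros [y1 y2] [Hy1 Hy2]; simpl in *.
    destruct (H1 y1 Hy1) as [d1 [Hd1 [E1 E1']]], (H2 y2 Hy2) as [d2 [Hd2 [E2 E2']]].
    exists (d1, d2); split; [apply in_prod; auto | split; split; auto].
  - exists (fun i => (g i, h i)); intros i.
    destruct (Hg i) as [Hg1 Hg2], (Hh i) as [Hh1 _].
    split; [split; auto | intros [H _]; auto].
Qed.

Lemma injective_bounded_le m n (f : nat -> nat) :
  (forall i j, i < m -> j < m -> f i = f j -> i = j) ->
  (forall i, i < m -> f i < n) -> m <= n.
Proof.
  intros Hinj Hb.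
  rewrite <- (length_seq m 0), <- (length_seq n 0), <- (length_map f (seq 0 m)).
  apply NoDup_incl_length.
  - apply NoDup_map_NoDup_ForallPairs; [|apply seq_NoDup].
    intros i j Hi Hj; apply in_seq in Hi, Hj; apply Hinj; lia.
  - intros k Hk; apply in_map_iff in Hk as [i [<- Hi]].
    apply in_seq in Hi; apply in_seq; specialize (Hb i); lia.
Qed.

Section ListOrders.
Variables (A : Type) (le : A -> A -> Prop).

Lemma rel_at_lt_length u v i j : rel_at le u v i j -> i < length u /\ j < length v.
Proof. intros [x [y [Hx [Hy _]]]]; split; apply nth_error_Some; congruence. Qed.

Lemma rel_at_trans u v w i j k : transitive A le ->
  rel_at le u v i j -> rel_at le v w j k -> rel_at le u w i k.
Proof.
  intros Ht [x [y [Hx [Hy Hxy]]]] [y' [z [Hy' [Hz Hyz]]]].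
  rewrite Hy in Hy'; injection Hy' as <-; exists x, z; eauto.
Qed.

Lemma word_le_trans : transitive A le -> transitive (list A) (word_le le).
Proof.
  intros Ht u v w [f [Hfm Hf]] [g [Hgm Hg]]; exists (fun i => g (f i)); split.
  - intros i j Hij; apply Hgm; split; [apply Hfm; lia|].
    apply (rel_at_lt_length _ _ _ _ (Hf j ltac:(lia))).
  - intros i Hi; apply (rel_at_trans _ v _ _ (f i)); auto.
    apply Hg, (rel_at_lt_length _ _ _ _ (Hf i Hi)).
Qed.

Lemma mset_le_trans : transitive A le -> transitive (list A) (mset_le le).
Proof.
  intros Ht u v w [f [Hfi Hf]] [g [Hgi Hg]]; exists (fun i => g (f i)); split.
  - intros i j Hi Hj E; apply Hfi, Hgi; auto;
      [apply (rel_at_lt_length _ _ _ _ (Hf i Hi)) | apply (rel_at_lt_length _ _ _ _ (Hf j Hj))].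
  - intros i Hi; apply (rel_at_trans _ v _ _ (f i)); auto.
    apply Hg, (rel_at_lt_length _ _ _ _ (Hf i Hi)).
Qed.

Lemma hoare_le_trans : transitive A le -> transitive (list A) (hoare_le le).
Proof.
  intros Ht u v w Huv Hvw a Ha.
  destruct (Huv a Ha) as [b [Hb Hab]], (Hvw b Hb) as [c [Hc Hbc]]; eauto.
Qed.

Lemma word_le_mset_le u v : word_le le u v -> mset_le le u v.
Proof.
  intros [f [Hfm Hf]]; exists f; split; auto.
  intros i j Hi Hj E; destruct (Nat.lt_trichotomy i j) as [H|[H|H]]; auto;
    [specialize (Hfm i j ltac:(lia)) | specialize (Hfm j i ltac:(lia))]; lia.
Qed.

Lemma mset_le_length u v : mset_le le u v -> length u <= length v.
Proof.
  intros [f [Hfi Hf]]; apply (injective_bounded_le _ _ f Hfi).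
  intros i Hi; apply (rel_at_lt_length _ _ _ _ (Hf i Hi)).
Qed.

Lemma mset_le_In u v : mset_le le u v -> forall a, In a u -> exists b, In b v /\ le a b.
Proof.
  intros [f [_ Hf]] a Ha; destruct (In_nth_error _ _ Ha) as [i Hi].
  destruct (Hf i ltac:(apply nth_error_Some; congruence)) as [x [b [Hx [Hb Hxb]]]].
  rewrite Hi in Hx; injection Hx as <-; eauto using nth_error_In.
Qed.

Lemma Forall2_rel_at u v : Forall2 le u v -> forall i, i < length u -> rel_at le u v i i.
Proof.
  induction 1 as [|x y u v Hxy _ IH]; intros [|i] Hi; simpl in Hi; try lia.
  - exists x, y; auto.
  - exact (IH i ltac:(lia)).
Qed.

Lemma Forall2_word_le u v : Forall2 le u v -> word_le le u v.
Proof. exists (fun i => i); split; [lia | apply Forall2_rel_at; auto]. Qed.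

Lemma word_le_singleton x y : word_le le [x] [y] <-> le x y.
Proof.
  split.
  - intros H%word_le_mset_le; destruct (mset_le_In _ _ H x) as [b [[<-|[]] Hxb]]; simpl; auto.
  - intros Hxy; apply Forall2_word_le; auto.
Qed.

Lemma mset_le_singleton x y : mset_le le [x] [y] <-> le x y.
Proof.
  split.
  - intros H; destruct (mset_le_In _ _ H x) as [b [[<-|[]] Hxb]]; simpl; auto.
  - intros Hxy; apply word_le_mset_le, Forall2_word_le; auto.
Qed.

Lemma hoare_le_singleton x y : hoare_le le [x] [y] <-> le x y.
Proof.
  split.
  - intros H; destruct (H x) as [b [[<-|[]] Hxb]]; simpl; auto.
  - intros Hxy a [<-|[]]; exists y; simpl; auto.
Qed.

Lemma Forall2_qeq_word_le u v : Forall2 (qeq le) u v -> qeq (word_le le) u v.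
Proof.
  intros H; split; apply Forall2_word_le.
  - exact (Forall2_impl _ (fun a b Hab => proj1 Hab) H).
  - exact (Forall2_impl _ (fun b a Hab => proj2 Hab) (Forall2_flip H)).
Qed.

Lemma finite_downsets_list : finite_downsets le -> forall w : list A,
  exists U, forall a b, In b w -> le a b -> exists d, In d U /\ qeq le a d.
Proof.
  intros Hfd; induction w as [|b w [U HU]]; [exists []; intros a b []|].
  destruct (Hfd b) as [D HD]; exists (D ++ U); intros a c [<-|Hc] Hac.
  - destruct (HD a Hac) as [d [Hd Had]]; exists d; auto using in_or_app.
  - destruct (HU a c Hc Hac) as [d [Hd Had]]; exists d; auto using in_or_app.
Qed.

Lemma qeq_representatives (U y : list A) :
  (forall a, In a y -> exists d, In d U /\ qeq le a d) ->
  exists z, Forall2 (qeq le) y z /\ incl z U.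
Proof.
  induction y as [|a y IH]; intros Hy; [exists []; split; [constructor | intros x []]|].
  destruct (Hy a (or_introl eq_refl)) as [d [Hd Had]].
  destruct IH as [z [Hz HzU]]; [intros b Hb; apply Hy; right; exact Hb|].
  exists (d :: z); split; [constructor; auto | intros x [<-|Hx]; auto].
Qed.

Fixpoint words_upto (n : nat) (U : list A) : list (list A) :=
  match n with
  | 0 => [[]]
  | S n => [] :: flat_map (fun a => map (cons a) (words_upto n U)) U
  end.

Lemma In_words_upto n (U z : list A) : length z <= n -> incl z U -> In z (words_upto n U).
Proof.
  revert z; induction n as [|n IH]; intros [|a z] Hl Hz; simpl in *; auto; try lia.
  right; apply in_flat_map; exists a; split; [apply Hz; left; auto|].
  apply in_map, IH; [lia | intros x Hx; apply Hz; right; exact Hx].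
Qed.

Lemma mset_le_qeq_cover : finite_downsets le -> forall w, exists Z,
  forall y, mset_le le y w -> exists z, In z Z /\ Forall2 (qeq le) y z.
Proof.
  intros Hfd w; destruct (finite_downsets_list Hfd w) as [U HU].
  exists (words_upto (length w) U); intros y Hyw.
  destruct (qeq_representatives U y) as [z [Hyz HzU]].
  { intros a Ha; destruct (mset_le_In _ _ Hyw a Ha) as [b [Hb Hab]]; eauto. }
  exists z; split; auto.
  apply In_words_upto; auto.
  rewrite <- (Forall2_length Hyz); apply mset_le_length; exact Hyw.
Qed.

Lemma word_le_finite_downsets : finite_downsets le -> finite_downsets (word_le le).
Proof.
  intros Hfd w; destruct (mset_le_qeq_cover Hfd w) as [Z HZ]; exists Z.
  intros y Hyw%word_le_mset_le; destruct (HZ y Hyw) as [z [Hz Hyz]].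
  exists z; auto using Forall2_qeq_word_le.
Qed.

Lemma mset_le_finite_downsets : finite_downsets le -> finite_downsets (mset_le le).
Proof.
  intros Hfd w; destruct (mset_le_qeq_cover Hfd w) as [Z HZ]; exists Z.
  intros y Hyw; destruct (HZ y Hyw) as [z [Hz [Hl Hr]%Forall2_qeq_word_le]].
  exists z; split; [|split]; auto using word_le_mset_le.
Qed.

Lemma exists_filtered_sublist (U : list A) (P : A -> Prop) :
  exists z, length z <= length U /\ forall d, In d z <-> In d U /\ P d.
Proof.
  induction U as [|a U [z [Hl Hz]]]; [exists []; simpl; split; [lia | tauto]|].
  destruct (classic (P a)) as [Pa|nPa].
  - exists (a :: z); simpl; split; [lia|]; intros d; rewrite Hz.
    split; [intros [<-|H]; tauto | intros [[<-|H] Pd]; tauto].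
  - exists z; simpl; split; [lia|]; intros d; rewrite Hz.
    split; [tauto | intros [[<-|H] Pd]; tauto].
Qed.

Lemma hoare_le_finite_downsets : finite_downsets le -> finite_downsets (hoare_le le).
Proof.
  intros Hfd w; destruct (finite_downsets_list Hfd w) as [U HU].
  exists (words_upto (length U) U); intros y Hyw.
  destruct (exists_filtered_sublist U (fun d => exists a, In a y /\ qeq le a d))
    as [z [Hl Hz]].
  exists z; split; [apply In_words_upto; auto; intros d Hd; apply Hz, Hd|split].
  - intros a Ha; destruct (Hyw a Ha) as [b [Hb Hab]].
    destruct (HU a b Hb Hab) as [d [Hd Had]]; exists d; split; [apply Hz; eauto | apply Had].
  - intros d [_ [a [Ha Had]]]%Hz; exists a; split; [exact Ha | apply Had].
Qed.

End ListOrders.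

Lemma omega_qo_word {A : Type} (le : A -> A -> Prop) : omega_qo le -> omega_qo (word_le le).
Proof.
  intros [Ht Hfd Hc]; split.
  - apply word_le_trans; exact Ht.
  - apply word_le_finite_downsets; exact Hfd.
  - apply (has_ascending_chain_embed le _ (fun x => [x])); [apply word_le_singleton | exact Hc].
Qed.

Lemma omega_qo_mset {A : Type} (le : A -> A -> Prop) : omega_qo le -> omega_qo (mset_le le).
Proof.
  intros [Ht Hfd Hc]; split.
  - apply mset_le_trans; exact Ht.
  - apply mset_le_finite_downsets; exact Hfd.
  - apply (has_ascending_chain_embed le _ (fun x => [x])); [apply mset_le_singleton | exact Hc].
Qed.

Lemma omega_qo_hoare {A : Type} (le : A -> A -> Prop) : omega_qo le -> omega_qo (hoare_le le).
Proof.
  intros [Ht Hfd Hc]; split.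
  - apply hoare_le_trans; exact Ht.
  - apply hoare_le_finite_downsets; exact Hfd.
  - apply (has_ascending_chain_embed le _ (fun x => [x])); [apply hoare_le_singleton | exact Hc].
Qed.

Lemma omega_qo_ele (e : ewqo) : omega_qo (ele e).
Proof.
  induction e; simpl;
    auto using omega_qo_nat, omega_qo_sum, omega_qo_prod, omega_qo_word, omega_qo_mset,
      omega_qo_hoare.
Qed.

Theorem mainTheorem20 (e : ewqo) : height_is_omega (ele e).
Proof.
  destruct (omega_qo_ele e) as [Ht Hfd Hc].
  exact (height_is_omega_of_chain _ _ Ht Hfd Hc).
Qed.
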